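(* In the setting of the context, for every height $h$ with $h_a+1\le h\le h_+$ there is an adversarial block at height $h$ mined during $(\tau,\tau_+]$.
   Context: Model: blocks numbered by mining time $t_j$, labeled honest or adversarial; each non-genesis block has an earlier parent; $h_b$ is height. Honest blocks extend a longest chain in their miner's view and are published immediately; any new longest chain mined or received by an honest node at time $t$ reaches all honest nodes by $t+\Delta$. Target transaction $tx$ appears at time $\tau$ and honest blocks mined after $\tau$ on chains not containing $tx$ include it. Condition 1 holds: all honest blocks are at distinct heights, and honest blocks mined after $\tau$ are higher than honest blocks mined by $\tau$. A chain is public at time $t$ if it is in all honest nodes' views at time $t$; it is credible at time $t$ if it is no shorter than every public chain at time $t$. Fix an attack under which the safety of $tx$ (under the $\kappa$-confirmation rule) is violated. Choose blocks $b,c,d$ minimizing $h_+=\max(h_c,h_d)$ subject to: (1) chain $c$ is credible at time $t_c$, contains $tx$ in block $b$, and $h_c\ge h_b+\kappa-1$; (2) chain $d$ is credible at time $t_d$, $h_d\ge h_b+\kappa-1$, chain $d$ does not contain block $b$, and chain $d$ does not contain $tx$ at heights $\le h_b-1$. Let $\tau_+=\max(t_c,t_d)$, let $u$ be the highest honest block mined by time $\tau$, and let $a$ be the highest block of chain $d$ mined by time $\tau$. *)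

(* blocks are natural numbers (indexed by mining order),
   times are real numbers (Stdlib R). *)
From Stdlib Require Import Reals Lra Lia.
Open Scope R_scope.

(* Block 0 is the genesis block.  A chain is identified with its tip block;
   "chain y contains block x" means x is an ancestor of y (inclusive).
   Views are those of honest nodes only (every element of [Node] is honest). *)
Record Model := {
  Node : Type;
  t : nat -> R;                    (* mining time of block j *)
  honest : nat -> Prop;
  parent : nat -> nat;
  height : nat -> nat;
  miner : nat -> Node;             (* miner of an honest block *)
  view : Node -> R -> nat -> Prop; (* view n s c : chain c is in n's view at time s *)
  Delta : R;
  tau : R;                         (* time at which the target tx appears *)
  txin : nat -> Prop;              (* block includes the target transaction tx *)

  t_mono : forall j k, (j < k)%nat -> t j < t k;
  parent_lt : forall b, (0 < b)%nat -> (parent b < b)%nat;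
  height_0 : height 0%nat = 0%nat;
  height_S : forall b, (0 < b)%nat -> height b = S (height (parent b));

  view_mined : forall n s c, view n s c -> t c <= s;
  view_mono : forall n s s' c, s <= s' -> view n s c -> view n s' c;
  view_parent : forall n s c, view n s c -> view n s (parent c);

  honest_ext : forall b, (0 < b)%nat -> honest b ->
      view (miner b) (t b) (parent b) /\
      (forall c, view (miner b) (t b) c -> c <> b ->
                 (height c <= height (parent b))%nat);
  honest_pub : forall b, (0 < b)%nat -> honest b -> view (miner b) (t b) b;

  Delta_nonneg : 0 <= Delta;
  propagate : forall n s c, view n s c ->
      (forall c', view n s c' -> (height c' <= height c)%nat) ->
      forall m, view m (s + Delta) c;

  tx_after : forall b, txin b -> tau < t b;
  tx_honest : forall b, (0 < b)%nat -> honest b -> tau < t b ->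
      ~ (exists k, txin (Nat.iter k parent (parent b))) -> txin b
}.

Definition contains (M : Model) (y x : nat) : Prop :=
  exists k, Nat.iter k (parent M) y = x.

Definition Condition1 (M : Model) : Prop :=
  (forall b b', honest M b -> honest M b' -> height M b = height M b' -> b = b') /\
  (forall b b', honest M b -> honest M b' -> t M b <= tau M -> tau M < t M b' ->
     (height M b < height M b')%nat).

Definition public (M : Model) (s : R) (c : nat) : Prop :=
  forall n : Node M, view M n s c.

Definition credible (M : Model) (s : R) (c : nat) : Prop :=
  forall c', public M s c' -> (height M c' <= height M c)%nat.

Definition valid_triple (M : Model) (kappa b c d : nat) : Prop :=
  (credible M (t M c) c /\ contains M c b /\ txin M b /\
   (height M b + kappa - 1 <= height M c)%nat) /\
  (credible M (t M d) d /\ (height M b + kappa - 1 <= height M d)%nat /\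
   ~ contains M d b /\
   (forall x, contains M d x -> (height M x <= height M b - 1)%nat -> ~ txin M x)).

(* Suppose every block at height h mined in (tau, tau_+] were honest.  If h <= h_d, the block of
   chain d at height h is mined after tau (it lies above a), hence honest.  Below h_b this puts tx
   on chain d below h_b, since an honest block mined after tau has tx on its chain at a height
   not exceeding its own; between h_b and h_c it would coincide with the honest block of chain c at
   height h (Condition 1), so d would contain b; above h_c, replacing d by it keeps the triple
   valid, so by minimality it is d itself, and then d could be replaced by its parent, contradicting
   minimality.  If h > h_d, symmetrically the honest block of chain c at height h must be c, which
   could be replaced by its parent. *)
From Stdlib Require Import Reals Lra Lia Classical Arith.
Open Scope R_scope.

Definition block_at (M : Model) (y h : nat) : nat :=
  Nat.iter (height M y - h) (parent M) y.

Section Chains.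
Variable M : Model.
Notation iter k y := (Nat.iter k (parent M) y).
Notation height := (height M).
Notation block_at := (block_at M).

Lemma pos_of_height_pos x : (0 < height x)%nat -> (0 < x)%nat.
Proof. destruct x; [rewrite height_0; lia | lia]. Qed.

Lemma height_iter k y : (k <= height y)%nat -> height (iter k y) = (height y - k)%nat.
Proof.
  induction k as [|k IH]; intros Hk; simpl; [lia|].
  assert (Hpos : (0 < iter k y)%nat) by (apply pos_of_height_pos; rewrite IH; lia).
  pose proof (height_S M _ Hpos). lia.
Qed.

Lemma iter_parent_le k y : (k <= height y)%nat -> (iter k y <= y)%nat.
Proof.
  induction k as [|k IH]; intros Hk; simpl; [lia|].
  assert (Hpos : (0 < iter k y)%nat)
    by (apply pos_of_height_pos; rewrite height_iter; lia).
  pose proof (parent_lt M _ Hpos). specialize (IH ltac:(lia)). lia.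
Qed.

Lemma iter_height_genesis y : iter (height y) y = 0%nat.
Proof.
  destruct (iter (height y) y) as [|n] eqn:E; [reflexivity|].
  pose proof (height_iter (height y) y (le_n _)) as H.
  rewrite E, height_S in H; [lia | lia].
Qed.

Lemma t_le_of_le i j : (i <= j)%nat -> t M i <= t M j.
Proof.
  intros H. destruct (Nat.eq_dec i j) as [->|]; [lra|].
  left; apply t_mono; lia.
Qed.

Lemma height_block_at y h : (h <= height y)%nat -> height (block_at y h) = h.
Proof. intros H. unfold block_at. rewrite height_iter; lia. Qed.

Lemma t_block_at_le y h : t M (block_at y h) <= t M y.
Proof. apply t_le_of_le, iter_parent_le. lia. Qed.

Lemma block_at_height y : block_at y (height y) = y.
Proof. unfold block_at. now rewrite Nat.sub_diag. Qed.

Lemma contains_block_at y h : contains M y (block_at y h).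
Proof. now exists (height y - h)%nat. Qed.

Lemma block_at_block_at y h1 h2 : (h1 <= h2 <= height y)%nat ->
  block_at (block_at y h2) h1 = block_at y h1.
Proof.
  intros H. unfold block_at at 1. rewrite height_block_at by lia.
  unfold block_at. rewrite <- Nat.iter_add. f_equal. lia.
Qed.

Lemma block_at_parent y h : (h < height y)%nat -> block_at (parent M y) h = block_at y h.
Proof.
  intros H. pose proof (height_S M y (pos_of_height_pos y ltac:(lia))).
  unfold block_at. replace (height y - h)%nat with (S (height (parent M y) - h)) by lia.
  now rewrite Nat.iter_succ_r.
Qed.

Lemma contains_trans y x w : contains M y x -> contains M x w -> contains M y w.
Proof.
  intros [k1 H1] [k2 H2]. exists (k2 + k1)%nat. now rewrite Nat.iter_add, H1.
Qed.

Lemma contains_parent y : contains M y (parent M y).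
Proof. now exists 1%nat. Qed.

(* [parent 0] is arbitrary, so [contains] may climb back up from genesis; such an [x] is then
   contained in every chain. *)
Lemma contains_genuine y z x : contains M y x -> ~ contains M z x ->
  (height x <= height y)%nat /\ x = block_at y (height x).
Proof.
  intros [k Hk] Hz. destruct (le_lt_dec k (height y)) as [Hle|Hlt].
  - subst x. rewrite height_iter by exact Hle. split; [lia|].
    unfold block_at. f_equal. lia.
  - exfalso. apply Hz. exists (k - height y + height z)%nat.
    rewrite Nat.iter_add, iter_height_genesis, <- (iter_height_genesis y),
      <- Nat.iter_add, <- Hk.
    f_equal. lia.
Qed.

Lemma honest_credible e : (0 < e)%nat -> honest M e -> credible M (t M e) e.
Proof.
  intros He Hh c' Hpub. destruct (Nat.eq_dec c' e) as [->|Hne]; [lia|].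
  destruct (honest_ext M e He Hh) as [_ Hlongest].
  pose proof (Hlongest c' (Hpub (miner M e)) Hne). pose proof (height_S M e He). lia.
Qed.

Lemma honest_parent_credible e : (0 < e)%nat -> honest M e ->
  credible M (t M (parent M e)) (parent M e).
Proof.
  intros He Hh c' Hpub. pose proof (t_mono M _ _ (parent_lt M e He)).
  pose proof (Hpub (miner M e)) as Hview.
  destruct (Nat.eq_dec c' e) as [->|Hne].
  - apply view_mined in Hview. lra.
  - destruct (honest_ext M e He Hh) as [_ Hlongest]. apply (Hlongest c'); [|exact Hne].
    eapply view_mono; [|exact Hview]. lra.
Qed.

(* If tx is already on the parent chain, it lies in the miner's view, which bounds its height. *)
Lemma honest_after_tau_txin e : (0 < e)%nat -> honest M e -> tau M < t M e ->
  exists x, contains M e x /\ (height x <= height e)%nat /\ txin M x.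
Proof.
  intros He Hh Ht. destruct (honest_ext M e He Hh) as [Hview Hlongest].
  destruct (classic (exists k, txin M (iter k (parent M e)))) as [[k Hx]|Hno].
  - exists (iter k (parent M e)). split; [|split; [|exact Hx]].
    + exists (k + 1)%nat. now rewrite Nat.iter_add.
    + destruct (Nat.eq_dec (iter k (parent M e)) e) as [->|Hne]; [lia|].
      pose proof (height_S M e He).
      enough (height (iter k (parent M e)) <= height (parent M e))%nat by lia.
      apply Hlongest; [|exact Hne].
      apply Nat.iter_invariant; [intros; now apply view_parent | exact Hview].
  - exists e. split; [now exists 0%nat|]. split; [lia|]. now apply tx_honest.
Qed.

Lemma valid_triple_change_c kappa b c d c' : valid_triple M kappa b c d ->
  credible M (t M c') c' -> contains M c' b -> (height b + kappa - 1 <= height c')%nat ->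
  valid_triple M kappa b c' d.
Proof. intros [[_ [_ [Hb _]]] Hd] Hcred Hc'b Hh. now repeat split. Qed.

Lemma valid_triple_subchain_d kappa b c d d' : valid_triple M kappa b c d ->
  contains M d d' -> credible M (t M d') d' -> (height b + kappa - 1 <= height d')%nat ->
  valid_triple M kappa b c d'.
Proof.
  intros [Hc [_ [_ [Hdb Hdtx]]]] Hdd' Hcred Hh. split; [exact Hc|].
  repeat split; [exact Hcred | exact Hh | |].
  - intros Hd'b. apply Hdb. now apply (contains_trans d d').
  - intros x Hx. apply Hdtx. now apply (contains_trans d d').
Qed.

End Chains.

Section MinimalTriple.
Variables (M : Model) (kappa b c d : nat).
Notation height := (height M).
Hypothesis kappa_pos : (1 <= kappa)%nat.
Hypothesis valid : valid_triple M kappa b c d.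
Hypothesis minimal : forall b' c' d', valid_triple M kappa b' c' d' ->
  (Nat.max (height c) (height d) <= Nat.max (height c') (height d'))%nat.

Lemma valid_b_on_c : (height b <= height c)%nat /\ b = block_at M c (height b).
Proof. destruct valid as [[_ [Hcb _]] [_ [_ [Hdb _]]]]. exact (contains_genuine M c d b Hcb Hdb). Qed.

Lemma valid_height_b_le_d : (height b <= height d)%nat.
Proof. destruct valid as [_ [_ [Hd _]]]. lia. Qed.

Lemma contains_block_at_c_b h : (height b <= h <= height c)%nat ->
  contains M (block_at M c h) b.
Proof.
  intros Hh. destruct valid_b_on_c as [_ Hb]. rewrite Hb.
  rewrite <- (block_at_block_at M c (height b) h) by lia. apply contains_block_at.
Qed.

Lemma minimal_honest_block_at_c h : (height d < h <= height c)%nat ->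
  honest M (block_at M c h) -> h = height c.
Proof.
  intros Hh Hhon. pose proof valid_height_b_le_d.
  assert (Hheight : height (block_at M c h) = h) by (apply height_block_at; lia).
  assert (Hpos : (0 < block_at M c h)%nat) by (apply (pos_of_height_pos M); lia).
  enough (Nat.max (height c) (height d) <= Nat.max h (height d))%nat by lia.
  rewrite <- Hheight. apply (minimal b), (valid_triple_change_c M kappa b c d).
  - exact valid.
  - now apply honest_credible.
  - apply contains_block_at_c_b. lia.
  - destruct valid as [_ [_ [Hd _]]]. lia.
Qed.

Lemma minimal_c_not_honest : (height d < height c)%nat -> ~ honest M c.
Proof.
  intros Hh Hhon. pose proof valid_height_b_le_d.
  assert (Hpos : (0 < c)%nat) by (apply (pos_of_height_pos M); lia).
  pose proof (height_S M c Hpos).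
  enough (Nat.max (height c) (height d) <= Nat.max (height (parent M c)) (height d))%nat by lia.
  apply (minimal b), (valid_triple_change_c M kappa b c d).
  - exact valid.
  - now apply honest_parent_credible.
  - destruct valid_b_on_c as [_ Hb]. rewrite Hb, <- block_at_parent by lia.
    apply contains_block_at.
  - destruct valid as [_ [_ [Hd _]]]. lia.
Qed.

Lemma minimal_honest_block_at_d h : (height c < h <= height d)%nat ->
  honest M (block_at M d h) -> h = height d.
Proof.
  intros Hh Hhon. pose proof (proj1 valid_b_on_c).
  assert (Hheight : height (block_at M d h) = h) by (apply height_block_at; lia).
  assert (Hpos : (0 < block_at M d h)%nat) by (apply (pos_of_height_pos M); lia).
  enough (Nat.max (height c) (height d) <= Nat.max (height c) h)%nat by lia.
  rewrite <- Hheight. apply (minimal b), (valid_triple_subchain_d M kappa b c d).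
  - exact valid.
  - apply contains_block_at.
  - now apply honest_credible.
  - destruct valid as [[_ [_ [_ Hc]]] _]. lia.
Qed.

Lemma minimal_d_not_honest : (height c < height d)%nat -> ~ honest M d.
Proof.
  intros Hh Hhon. pose proof (proj1 valid_b_on_c).
  assert (Hpos : (0 < d)%nat) by (apply (pos_of_height_pos M); lia).
  pose proof (height_S M d Hpos).
  enough (Nat.max (height c) (height d) <= Nat.max (height c) (height (parent M d)))%nat by lia.
  apply (minimal b), (valid_triple_subchain_d M kappa b c d).
  - exact valid.
  - apply contains_parent.
  - now apply honest_parent_credible.
  - destruct valid as [[_ [_ [_ Hc]]] _]. lia.
Qed.

End MinimalTriple.

Section Attack.
Variables (M : Model) (kappa b c d a h : nat).
Notation height := (height M).
Hypothesis honest_heights_distinct : forall e e', honest M e -> honest M e' ->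
  height e = height e' -> e = e'.
Hypothesis kappa_pos : (1 <= kappa)%nat.
Hypothesis valid : valid_triple M kappa b c d.
Hypothesis minimal : forall b' c' d', valid_triple M kappa b' c' d' ->
  (Nat.max (height c) (height d) <= Nat.max (height c') (height d'))%nat.
Hypothesis a_highest : forall a', contains M d a' -> t M a' <= tau M ->
  (height a' <= height a)%nat.
Hypothesis h_above_a : (height a + 1 <= h)%nat.
Hypothesis all_honest_at_h : forall e, height e = h -> tau M < t M e ->
  t M e <= Rmax (t M c) (t M d) -> honest M e.

Lemma honest_block_at_c : (height b <= h <= height c)%nat -> honest M (block_at M c h).
Proof.
  intros Hh. destruct valid as [[_ [_ [Hbtx _]]] _].
  pose proof (tx_after M b Hbtx).
  pose proof (proj2 (valid_b_on_c M kappa b c d valid)) as Hb.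
  assert (t M b <= t M (block_at M c h)).
  { rewrite Hb, <- (block_at_block_at M c (height b) h) by lia. apply t_block_at_le. }
  pose proof (t_block_at_le M c h). pose proof (Rmax_l (t M c) (t M d)).
  apply all_honest_at_h; [apply height_block_at | |]; lia || lra.
Qed.

Lemma honest_block_at_d : (h <= height d)%nat ->
  tau M < t M (block_at M d h) /\ honest M (block_at M d h).
Proof.
  intros Hh. assert (Hafter : tau M < t M (block_at M d h)).
  { apply Rnot_le_lt. intros Hbefore.
    pose proof (a_highest _ (contains_block_at M d h) Hbefore).
    rewrite height_block_at in * by lia. lia. }
  split; [exact Hafter|].
  pose proof (t_block_at_le M d h). pose proof (Rmax_r (t M c) (t M d)).
  apply all_honest_at_h; [apply height_block_at | |]; lia || lra.
Qed.

Lemma all_honest_at_h_absurd : (h <= Nat.max (height c) (height d))%nat -> False.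
Proof.
  intros Hh. pose proof (proj1 (valid_b_on_c M kappa b c d valid)).
  pose proof (valid_height_b_le_d M kappa b c d kappa_pos valid).
  destruct valid as [[_ [_ [_ Hc]]] [_ [Hd [Hdb Hdtx]]]].
  destruct (le_lt_dec h (height d)) as [Hhd|Hhd].
  - destruct (honest_block_at_d Hhd) as [Hafter Hhon].
    assert (Hheight : height (block_at M d h) = h) by (apply height_block_at; lia).
    destruct (lt_dec h (height b)) as [Hhb|Hhb];
      [|destruct (le_lt_dec h (height c)) as [Hhc|Hhc]].
    + destruct (honest_after_tau_txin M _ (pos_of_height_pos M (block_at M d h) ltac:(lia)) Hhon Hafter)
        as [x [Hx [Hxh Hxtx]]].
      apply (Hdtx x); [|lia|exact Hxtx].
      exact (contains_trans M _ _ _ (contains_block_at M d h) Hx).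
    + assert (Hsame : block_at M c h = block_at M d h).
      { apply honest_heights_distinct; [apply honest_block_at_c; lia | exact Hhon |].
        rewrite !height_block_at; lia. }
      apply Hdb, (contains_trans M _ (block_at M d h)); [apply contains_block_at|].
      rewrite <- Hsame. apply (contains_block_at_c_b M kappa b c d kappa_pos valid). lia.
    + assert (Htop : h = height d) by
        (apply (minimal_honest_block_at_d M kappa b c d kappa_pos valid minimal); [lia | exact Hhon]).
      apply (minimal_d_not_honest M kappa b c d kappa_pos valid minimal); [lia|].
      now rewrite <- (block_at_height M d), <- Htop.
  - assert (Hhon : honest M (block_at M c h)) by (apply honest_block_at_c; lia).
    assert (Htop : h = height c) by
      (apply (minimal_honest_block_at_c M kappa b c d kappa_pos valid minimal); [lia | exact Hhon]).
    apply (minimal_c_not_honest M kappa b c d kappa_pos valid minimal); [lia|].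
    now rewrite <- (block_at_height M c), <- Htop.
Qed.

End Attack.

Theorem mainTheorem6 (M : Model) (kappa b c d a h : nat) :
  Condition1 M ->
  (1 <= kappa)%nat ->
  valid_triple M kappa b c d ->
  (forall b' c' d', valid_triple M kappa b' c' d' ->
     (Nat.max (height M c) (height M d) <= Nat.max (height M c') (height M d'))%nat) ->
  (* a is the highest block of chain d mined by time tau *)
  contains M d a -> t M a <= tau M ->
  (forall a', contains M d a' -> t M a' <= tau M -> (height M a' <= height M a)%nat) ->
  (height M a + 1 <= h)%nat -> (h <= Nat.max (height M c) (height M d))%nat ->
  exists e, ~ honest M e /\ height M e = h /\
            tau M < t M e /\ t M e <= Rmax (t M c) (t M d).
Proof.
  intros [Hdistinct _] Hkappa Hvalid Hminimal _ _ Hhighest Hha Hhmax.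
  apply NNPP. intros Hno.
  apply (all_honest_at_h_absurd M kappa b c d a h Hdistinct Hkappa Hvalid Hminimal
           Hhighest Hha); [|exact Hhmax].
  intros e He Hafter Hbefore. apply NNPP. intros Hadv.
  apply Hno. exists e. now repeat split.
Qed.
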